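(* Let $G=(V,E)$ be a graph, let $r:V\to\mathbb{Z}_+$, and let $S\subseteq V$. Then the following are equivalent: (i) $S$ is a vector connectivity set for $(G,r)$; (ii) for every non-empty set $X\subseteq V$ such that $G[X]$ is connected and $R(X)>|N_G(X)|$, we have $S\cap X\neq\emptyset$.
   Context: All graphs are finite, simple and undirected; $\mathbb{Z}_+=\{0,1,2,\dots\}$. For $X\subseteq V$, $N_G(X)=\left(\bigcup_{v\in X}N_G(v)\right)\setminus X$ and $G[X]$ is the subgraph induced by $X$. For a vertex requirement function $r:V\to\mathbb{Z}_+$ and non-empty $X\subseteq V$, $R(X)=\max_{x\in X} r(x)$. For $S\subseteq V$ and $v\in V\setminus S$, a $v$--$S$ fan of order $k$ is a collection of $k$ paths $P_1,\dots,P_k$, each connecting $v$ to a vertex of $S$, such that $V(P_i)\cap V(P_j)=\{v\}$ for all $i<j$; $v$ is $k$-linked to $S$ if such a fan exists. A vector connectivity set for $(G,r)$ is a set $S\subseteq V$ such that every $v\in V\setminus S$ is $r(v)$-linked to $S$. *)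

(* A finite simple graph G = (V,E) is a symmetric, irreflexive
   relation e : rel T on a finite type T (the vertex set V = T). *)
From mathcomp Require Import all_boot.
Set Implicit Arguments. Unset Strict Implicit. Unset Printing Implicit Defensive.

Definition simple_graph (T : finType) (e : rel T) : Prop :=
  symmetric e /\ irreflexive e.

Definition nbhd (T : finType) (e : rel T) (X : {set T}) : {set T} :=
  [set y | (y \notin X) && [exists x in X, e x y]].

Definition induced_rel (T : finType) (e : rel T) (X : {set T}) : rel T :=
  [rel a b | [&& e a b, a \in X & b \in X]].

Definition induced_connected (T : finType) (e : rel T) (X : {set T}) : Prop :=
  forall x y, x \in X -> y \in X -> connect (induced_rel e X) x y.

Definition Rmax (T : finType) (r : T -> nat) (X : {set T}) : nat :=
  \max_(x in X) r x.

Definition path_to (T : finType) (e : rel T) (v : T) (S : {set T}) (p : seq T) : bool :=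
  [&& path e v p, uniq (v :: p) & last v p \in S].

Definition fan (T : finType) (e : rel T) (v : T) (S : {set T}) (k : nat)
    (P : 'I_k -> seq T) : Prop :=
  (forall i, path_to e v S (P i)) /\
  (forall i j, i != j -> forall x, x \in v :: P i -> x \in v :: P j -> x = v).

Definition k_linked (T : finType) (e : rel T) (v : T) (S : {set T}) (k : nat) : Prop :=
  exists P : 'I_k -> seq T, fan e v S P.

Definition vector_connectivity_set (T : finType) (e : rel T) (r : T -> nat)
    (S : {set T}) : Prop :=
  forall v, v \notin S -> k_linked e v S (r v).

From mathcomp Require Import all_boot.
From Stdlib Require Import Classical.
Set Implicit Arguments. Unset Strict Implicit. Unset Printing Implicit Defensive.

(* (i) => (ii): if X avoids S, take x in X with r(x) = R(X); each of the r(x)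
   paths of an x--S fan leaves X, and the first vertex outside X on each path
   lies in N(X); these vertices are distinct, so |N(X)| >= R(X).
   (ii) => (i): by Menger's theorem applied in G - v to N(v) and S, a vertex
   v not in S that is not r(v)-linked to S has a separator Z with |Z| < r(v).
   The component X of v in G - (Z \ v) is connected, contains v, avoids S and
   has N(X) inside Z, so |N(X)| < r(v) <= R(X), contradicting (ii).
   Menger's theorem is proved by induction on the number of edges, following
   Diestel: contract an edge xy; if G/xy has a separator of size < k, it lifts
   to a separator X of G of size k containing x and y, and k disjoint A--X and
   X--B paths in G - xy (induction) glue along X; otherwise the k disjoint
   paths of G/xy (induction) lift to G. *)

Section PathSurgery.
Variables (T : eqType) (e : rel T).

Lemma path_prefix_to a p z :
  path e a p -> z \in belast a p ->
  exists p', [/\ path e a p', last a p' = z & {subset a :: p' <= belast a p}].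
Proof.
elim: p a => [|b p IHp] a //= /andP[eab pab]; rewrite inE => /orP[/eqP->|zp].
  by exists [::]; split => // w; rewrite !inE => ->.
have [p' [pbp' lp' sp']] := IHp b pab zp.
exists (b :: p'); split => //=; first by rewrite eab.
move=> w; rewrite inE => /orP[/eqP->|wp']; first by rewrite inE eqxx.
by rewrite inE sp' ?orbT.
Qed.

Lemma path_suffix_from c q z :
  path e c q -> z \in q ->
  exists q', [/\ path e z q', last z q' = last c q & {subset z :: q' <= q}].
Proof.
elim: q c => [|b q IHq] c //= /andP[ecb pbq]; rewrite inE => /orP[/eqP->|zq].
  by exists q; split.
have [q' [pzq' lq' sq']] := IHq b pbq zq.
by exists q'; split => // w wq'; rewrite inE sq' ?orbT.
Qed.

Lemma path_take_first (X : pred T) a p :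
  path e a p -> has X (a :: p) ->
  exists n, [/\ path e a (take n p), X (last a (take n p))
              & ~~ has X (belast a (take n p))].
Proof.
elim: p a => [|b p IHp] a /=; first by move=> _ /orP[Xa|//]; exists 0.
case/andP=> eab pbp; case Xa: (X a); first by exists 0.
move=> /= Xbp; have [n [pn Xn hn]] := IHp b pbp Xbp.
by exists n.+1 => /=; rewrite eab pn Xn /= Xa.
Qed.

Lemma path_drop_last (X : pred T) a p :
  path e a p -> has X (a :: p) ->
  exists s c q, [/\ a :: p = s ++ c :: q, X c, path e c q & ~~ has X q].
Proof.
elim: p a => [|b p IHp] a /=.
  by move=> _ /orP[Xa|//]; exists [::], a, [::].
case/andP=> eab pbp; case Xbp: (has X (b :: p)).
  have [s [c [q [-> Xc pcq hq]]]] := IHp b pbp Xbp.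
  by exists (a :: s), c, q.
move=> /orP[Xa|Xp]; last by move: Xbp; rewrite /= Xp.
by exists [::], a, (b :: p); split; rewrite //= ?eab //; apply: negbT.
Qed.

Lemma path_exit_edge (X : pred T) a p :
  path e a p -> X a -> ~~ X (last a p) ->
  exists y z, [/\ y \in p, ~~ X y, z \in a :: p, X z & e z y].
Proof.
elim: p a => [|b p IHp] a /=; first by move=> _ ->.
case/andP=> eab pbp Xa Xl; case Xb: (X b).
  have [y [z [yp Xy zp Xz ezy]]] := IHp b pbp Xb Xl.
  by exists y, z; split; rewrite // inE ?yp ?zp orbT.
by exists b, a; rewrite !inE !eqxx Xb.
Qed.

End PathSurgery.

Lemma induced_path (T : finType) (e : rel T) (U : {set T}) a p :
  (a \in U) && path (induced_rel e U) a p = path e a p && all [in U] (a :: p).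
Proof.
elim: p a => [|b p IHp] a /=; first by rewrite !andbT.
rewrite -[induced_rel e U a b]/[&& e a b, a \in U & b \in U] -!andbA IHp.
by case: (a \in U); rewrite /= ?andbF // andbCA.
Qed.

Lemma path_induced_mem (T : finType) (e : rel T) a p :
  path e a p -> path (induced_rel e [set z in a :: p]) a p.
Proof.
apply: (sub_in_path (P := [in a :: p])); last exact/allP.
by move=> u w up wp euw; rewrite /induced_rel /= euw !in_set; apply/and3P.
Qed.

Definition verts (T : Type) (q : T * seq T) : seq T := q.1 :: q.2.

Section Linkage.
Variables (T : finType) (e : rel T).

Definition ab_path (A B : {set T}) (q : T * seq T) : bool :=
  [&& path e q.1 q.2, q.1 \in A, last q.1 q.2 \in B & uniq (verts q)].

Definition linkage (A B : {set T}) k (F : 'I_k -> T * seq T) : Prop :=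
  (forall i, ab_path A B (F i)) /\
  (forall i j, i != j -> forall z, z \in verts (F i) -> z \in verts (F j) -> False).

Definition separates (A B X : {set T}) : Prop :=
  forall a p, a \in A -> path e a p -> last a p \in B -> has [in X] (a :: p).

End Linkage.
Arguments linkage {T} e A B k F.

Section LinkageTrim.
Variables (T : finType) (e : rel T).

Lemma linkage_shrink A B A' B' k (F G : 'I_k -> T * seq T) :
  linkage e A B k F -> (forall i, ab_path e A' B' (G i)) ->
  (forall i, {subset verts (G i) <= verts (F i)}) -> linkage e A' B' k G.
Proof.
move=> [_ disjF] abG subGF; split=> // i j ij z zi zj.
exact: (disjF i j ij z (subGF i z zi) (subGF j z zj)).
Qed.

Lemma linkage_trim_first A X k (F : 'I_k -> T * seq T) :
  linkage e A X k F ->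
  exists G, linkage e A X k G /\ forall i, ~~ has [in X] (belast (G i).1 (G i).2).
Proof.
move=> linkF; have [abF _] := linkF.
have /fin_all_exists[G HG] : forall i, exists q, [/\ ab_path e A X q,
    {subset verts q <= verts (F i)} & ~~ has [in X] (belast q.1 q.2)].
  move=> i; have /and4P[pF aA lX uF] := abF i.
  have hasX : has [in X] (verts (F i)).
    by apply/hasP; exists (last (F i).1 (F i).2); first exact: mem_last.
  have [n [pn Xn hn]] := path_take_first pF hasX.
  exists ((F i).1, take n (F i).2); split=> //.
    by rewrite /ab_path pn aA Xn /=; move: (take_uniq n.+1 uF).
  by move=> z; rewrite !inE => /orP[->//|/mem_take ->]; rewrite orbT.
exists G; split=> [|i]; last by case: (HG i).
by apply: linkage_shrink linkF _ _ => i; case: (HG i).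
Qed.

Lemma linkage_trim_last X B k (F : 'I_k -> T * seq T) :
  linkage e X B k F -> exists G, linkage e X B k G /\ forall i, ~~ has [in X] (G i).2.
Proof.
move=> linkF; have [abF _] := linkF.
have /fin_all_exists[G HG] : forall i, exists q, [/\ ab_path e X B q,
    {subset verts q <= verts (F i)} & ~~ has [in X] q.2].
  move=> i; have /and4P[pF aX lB uF] := abF i.
  have hasX : has [in X] (verts (F i)) by rewrite /= aX.
  have [s [c [q [Fsq Xc pcq hq]]]] := path_drop_last pF hasX.
  exists (c, q); split=> //.
    have lq : last c q = last (F i).1 (F i).2.
      by rewrite -[RHS]/(last c (verts (F i))) /verts Fsq last_cat.
    by rewrite /ab_path pcq Xc lq lB; move: uF; rewrite /verts Fsq cat_uniq => /and3P[].
  by move=> z zq; rewrite /verts Fsq mem_cat zq orbT.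
exists G; split=> [|i]; last by case: (HG i).
by apply: linkage_shrink linkF _ _ => i; case: (HG i).
Qed.

End LinkageTrim.

Lemma injective_onto_small (T : finType) k (f : 'I_k -> T) (X : {set T}) :
  injective f -> (forall i, f i \in X) -> #|X| <= k -> forall z, z \in X -> exists i, f i = z.
Proof.
move=> injf fX cardX z; have imX : f @: 'I_k =i X.
  have sub : f @: 'I_k \subset X by apply/subsetP => _ /imsetP[i _ ->].
  apply/subset_cardP => //; apply/eqP.
  by rewrite eqn_leq subset_leq_card // card_imset // card_ord.
by rewrite -imX => /imsetP[i _ ->]; exists i.
Qed.

Section Glue.
Variables (T : finType) (e : rel T) (A B X : {set T}).
Hypothesis sepX : separates e A B X.

Lemma separator_crossing q1 c q2 z :
  ab_path e A X q1 -> ~~ has [in X] (belast q1.1 q1.2) ->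
  path e c q2 -> last c q2 \in B -> ~~ has [in X] q2 ->
  z \in verts q1 -> z \in q2 -> False.
Proof.
move=> /and4P[p1 a1A l1X _] hX1 p2 l2B hX2 z1 z2.
have zX : z \notin X by apply: contraNN hX2 => zX; apply/hasP; exists z.
have zb : z \in belast q1.1 q1.2.
  move: z1; rewrite /verts lastI mem_rcons inE => /orP[/eqP ez|//].
  by rewrite ez l1X in zX.
have [p' [pp' lp' sp']] := path_prefix_to p1 zb.
have [q' [pq' lq' sq']] := path_suffix_from p2 z2.
have := sepX (p := p' ++ q') a1A; rewrite cat_path pp' lp' pq' last_cat lp' lq'.
move=> /(_ isT l2B) /hasP[w]; rewrite -cat_cons mem_cat => /orP[/sp' wb|wq'] wX.
  by move: hX1 => /hasP; apply; exists w.
by move: hX2 => /hasP; apply; exists w; rewrite // sq' // inE wq' orbT.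
Qed.

Lemma linkage_concat k (G1 G2 : 'I_k -> T * seq T) :
  #|X| <= k ->
  linkage e A X k G1 -> (forall i, ~~ has [in X] (belast (G1 i).1 (G1 i).2)) ->
  linkage e X B k G2 -> (forall j, ~~ has [in X] (G2 j).2) ->
  exists F, linkage e A B k F.
Proof.
move=> cardX [ab1 disj1] hX1 [ab2 disj2] hX2.
pose end1 i := last (G1 i).1 (G1 i).2.
have start2_inj : injective (fun j => (G2 j).1).
  move=> j j' eq; apply/eqP/contraT => ne; exfalso.
  by apply: (disj2 j j' ne (G2 j).1); [|rewrite eq]; apply: mem_head.
have /fin_all_exists[m mP] : forall i, exists j, (G2 j).1 = end1 i.
  move=> i; apply: injective_onto_small start2_inj _ cardX _ _.
    by move=> j; case/and4P: (ab2 j).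
  by case/and4P: (ab1 i).
have cross i j z : z \in verts (G1 i) -> z \in (G2 j).2 -> False.
  have /and4P[p2 _ l2B _] := ab2 j.
  exact: (separator_crossing (ab1 i) (hX1 i) p2 l2B (hX2 j)).
exists (fun i => ((G1 i).1, (G1 i).2 ++ (G2 (m i)).2)); split=> [i|i j ij z].
  have /and4P[p1 a1A _ u1] := ab1 i; have /and4P[p2 _ l2B u2] := ab2 (m i).
  have uniq_cat : uniq (verts (G1 i) ++ (G2 (m i)).2).
    have u2' : uniq (G2 (m i)).2 by case/andP: u2.
    rewrite cat_uniq u1 u2' andbT /=.
    by apply/hasPn => z z2; apply/negP => z1; exact: (cross i (m i) z z1 z2).
  rewrite /ab_path /= cat_path p1 /= -/(end1 i) -(mP i) p2 last_cat -/(end1 i).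
  by rewrite -(mP i) l2B a1A; exact: uniq_cat.
rewrite /verts /= -!cat_cons !mem_cat => /orP[zi|zi] /orP[zj|zj].
- exact: (disj1 i j ij z).
- exact: (cross i (m j) z).
- exact: (cross j (m i) z).
have mij : m i != m j.
  apply: contra ij => /eqP mij; apply/contraT => ne; exfalso.
  by apply: (disj1 i j ne (end1 i)); [|rewrite -(mP i) mij mP]; apply: mem_last.
by apply: (disj2 (m i) (m j) mij z); rewrite /verts inE ?zi ?zj orbT.
Qed.

Lemma linkage_glue k (F1 F2 : 'I_k -> T * seq T) :
  #|X| <= k -> linkage e A X k F1 -> linkage e X B k F2 -> exists F, linkage e A B k F.
Proof.
move=> cardX /linkage_trim_first[G1 [link1 hX1]] /linkage_trim_last[G2 [link2 hX2]].
exact: linkage_concat cardX link1 hX1 link2 hX2.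
Qed.

End Glue.

Definition nedges (T : finType) (e : rel T) : nat := #|[set u : T * T | e u.1 u.2]|.

Definition delete_edge (T : eqType) (e : rel T) (x y : T) : rel T :=
  fun u w => e u w && ~~ ((u == x) && (w == y) || (u == y) && (w == x)).

Section DeleteEdge.
Variables (T : finType) (e : rel T) (x y : T).

Lemma delete_edge_sym : symmetric e -> symmetric (delete_edge e x y).
Proof.
move=> se u w; rewrite /delete_edge se; congr (_ && ~~ _).
by rewrite orbC (andbC (w == x)) (andbC (w == y)).
Qed.

Lemma delete_edge_irr : irreflexive e -> irreflexive (delete_edge e x y).
Proof. by move=> ie u; rewrite /delete_edge ie. Qed.

Lemma delete_edge_sub : subrel (delete_edge e x y) e.
Proof. by move=> u w /andP[]. Qed.

Lemma nedges_delete_edge : e x y -> nedges (delete_edge e x y) < nedges e.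
Proof.
move=> exy; apply: proper_card; apply/properP; split.
  by apply/subsetP => -[u w]; rewrite !inE => /andP[].
by exists (x, y); rewrite !inE /delete_edge /= ?exy // !eqxx.
Qed.

Variable X : {set T}.
Hypotheses (xX : x \in X) (yX : y \in X).

Lemma delete_edge_path_prefix a q :
  path e a q -> ~~ has [in X] (belast a q) -> path (delete_edge e x y) a q.
Proof.
elim: q a => [|b q IHq] a //= /andP[eab pbq] /norP[aX hq].
rewrite IHq // andbT /delete_edge eab /=.
have [ax ay] : a != x /\ a != y by split; apply: contraNneq aX => ->.
by rewrite (negbTE ax) (negbTE ay).
Qed.

Lemma delete_edge_path_suffix c q :
  path e c q -> ~~ has [in X] q -> path (delete_edge e x y) c q.
Proof.
elim: q c => [|b q IHq] c //= /andP[ecb pbq] /norP[bX hq].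
rewrite IHq // andbT /delete_edge ecb /=.
have [bx b_y] : b != x /\ b != y by split; apply: contraNneq bX => ->.
by rewrite (negbTE bx) (negbTE b_y) !andbF.
Qed.

Lemma separates_delete_edge_prefix A B Z :
  separates e A B X -> separates (delete_edge e x y) A X Z -> separates e A B Z.
Proof.
move=> sepX sepZ a p aA pap lB.
have [n [pn Xn hn]] := path_take_first pap (sepX a p aA pap lB).
have /hasP[w win wZ] := sepZ a (take n p) aA (delete_edge_path_prefix pn hn) Xn.
by apply/hasP; exists w => //; move: win; rewrite !inE => /orP[->|/mem_take ->]; rewrite ?orbT.
Qed.

Lemma separates_delete_edge_suffix A B Z :
  separates e A B X -> separates (delete_edge e x y) X B Z -> separates e A B Z.
Proof.
move=> sepX sepZ a p aA pap lB.
have [s [c [q [aps Xc pcq hq]]]] := path_drop_last pap (sepX a p aA pap lB).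
have lq : last c q = last a p by rewrite -[RHS]/(last a (a :: p)) aps last_cat.
have := sepZ c q Xc (delete_edge_path_suffix pcq hq); rewrite lq => /(_ lB) /hasP[w win wZ].
by apply/hasP; exists w => //; rewrite aps mem_cat win orbT.
Qed.

End DeleteEdge.

(* The graph G/xy in which y is merged into x; y becomes an isolated vertex. *)
Definition contract (T : eqType) (e : rel T) (x y : T) : rel T :=
  fun u w => [&& u != y, w != y, u != w & e u w || (u == x) && e y w || (w == x) && e u y].

Definition merge_vtx (T : eqType) (x y z : T) : T := if z == y then x else z.

Section Contract.
Variables (T : finType) (e : rel T) (x y : T).
Hypotheses (se : symmetric e) (ie : irreflexive e) (exy : e x y).

Let nxy : x != y. Proof. by apply: contraTneq exy => ->; rewrite ie. Qed.

Lemma contract_sym : symmetric (contract e x y).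
Proof.
move=> u w; rewrite /contract (eq_sym u w) (se u w) (se y w) (se y u).
by case: (u != y); case: (w != y); case: (w != u); case: (e w u); case: (u == x);
  case: (w == x); case: (e w y); case: (e u y).
Qed.

Lemma contract_irr : irreflexive (contract e x y).
Proof. by move=> u; rewrite /contract eqxx /= !andbF. Qed.

Lemma nedges_contract : nedges (contract e x y) < nedges e.
Proof.
pose D := [set u : T * T | contract e x y u.1 u.2].
pose E := [set u : T * T | e u.1 u.2].
pose f (p : T * T) := if e p.1 p.2 then p else if p.1 == x then (y, p.2) else (p.1, y).
have fD p : p \in D -> f p \in E :\ (x, y).
  case: p => u w; rewrite !inE /contract /f /= => /and4P[uy wy uw euw].
  case e_uw: (e u w) in euw *; first by rewrite e_uw andbT; apply: contraNneq wy => -[_ ->].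
  rewrite /= in euw; case: ifP => [/eqP ux|ux] /=.
    rewrite ux eqxx /= in euw uw; move: euw => /orP[->|/andP[/eqP wx _]].
      by rewrite andbT; apply: contraNneq nxy => -[->].
    by rewrite wx eqxx in uw.
  rewrite ux /= in euw; case/andP: euw => _ ->; rewrite andbT.
  by apply: contraFneq ux => -[->].
have finj : {in D &, injective f}.
  move=> [u w] [u' w']; rewrite !inE /contract /f /=.
  move=> /and4P[uy wy _ H] /and4P[uy' wy' _ H'].
  case euw: (e u w); case euw': (e u' w') => //=.
  - by case: ifP => _ [eq1 eq2]; [move: uy; rewrite eq1 eqxx|move: wy; rewrite eq2 eqxx].
  - by case: ifP => _ [eq1 eq2]; [move: uy'; rewrite -eq1 eqxx|move: wy'; rewrite -eq2 eqxx].
  rewrite euw /= in H; rewrite euw' /= in H'.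
  case: ifP => ux; case: ifP => ux'.
  - by case=> eq2; rewrite (eqP ux) (eqP ux') eq2.
  - by case=> eq1 _; move: uy'; rewrite -eq1 eqxx.
  - by case=> eq1 _; move: uy; rewrite eq1 eqxx.
  rewrite ux /= in H; rewrite ux' /= in H'.
  by case=> eq1; case/andP: H => /eqP -> _; case/andP: H' => /eqP -> _; rewrite eq1.
rewrite /nedges -/D -/E -(card_in_imset finj).
apply: (@leq_ltn_trans #|E :\ (x, y)|).
  by apply: subset_leq_card; apply/subsetP => _ /imsetP[p pD ->]; apply: fD.
by rewrite (cardsD1 (x, y) E) inE /= exy.
Qed.

Lemma merge_vtx_step z w :
  e z w -> merge_vtx x y z = merge_vtx x y w \/ contract e x y (merge_vtx x y z) (merge_vtx x y w).
Proof.
move=> ezw; rewrite /merge_vtx /contract.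
have [zy|zy] := eqVneq z y; have [wy|wy] := eqVneq w y.
- by left.
- have [->|wx] := eqVneq w x; first by left.
  by right; rewrite eqxx (negbTE wy) nxy /= -zy ezw orbT.
- have [->|zx] := eqVneq z x; first by left.
  by right; rewrite eqxx (negbTE zy) nxy /= -wy ezw !orbT.
- right; rewrite zy wy ezw /= andbT; apply: contraTneq ezw => ->; by rewrite ie.
Qed.

Lemma contract_walk a p :
  path e a p ->
  exists p', [/\ path (contract e x y) (merge_vtx x y a) p',
    last (merge_vtx x y a) p' = merge_vtx x y (last a p)
  & {subset merge_vtx x y a :: p' <= map (merge_vtx x y) (a :: p)}].
Proof.
elim: p a => [|b p IHp] a /=; first by move=> _; exists [::]; split => // w; rewrite !inE.
case/andP=> eab pbp; have [p' [pp' lp' sp']] := IHp b pbp.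
have [eq|cab] := merge_vtx_step eab.
  by exists p'; rewrite eq; split => // w /sp' wp; rewrite inE wp orbT.
exists (merge_vtx x y b :: p'); split => //=; first by rewrite cab.
by move=> w; rewrite inE => /orP[/eqP->|/sp' wp]; rewrite inE ?eqxx ?wp ?orbT.
Qed.

Lemma separates_contract (A B Y : {set T}) :
  separates (contract e x y) (merge_vtx x y @: A) (merge_vtx x y @: B) Y ->
  separates e A B (merge_vtx x y @^-1: Y).
Proof.
move=> sepY a p aA pap lB; have [p' [pp' lp' sp']] := contract_walk pap.
have := sepY _ p' (imset_f _ aA) pp'; rewrite lp' => /(_ (imset_f _ lB)).
case/hasP => w /sp' /mapP[z zp ->] wY.
by apply/hasP; exists z; rewrite // inE.
Qed.

Lemma contract_path_avoid a p : path (contract e x y) a p -> y \notin p.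
Proof.
elim: p a => [|b p IHp] a //= /andP[/and4P[_ b_y _ _] pbp].
by rewrite inE negb_or eq_sym b_y (IHp b pbp).
Qed.

Lemma contract_small_separator (A B Y : {set T}) k :
  separates (contract e x y) (merge_vtx x y @: A) (merge_vtx x y @: B) Y -> #|Y| < k ->
  (forall X, separates e A B X -> k <= #|X|) ->
  exists X, [/\ separates e A B X, #|X| <= k, x \in X & y \in X].
Proof.
move=> sepY cardY minsep; pose X := merge_vtx x y @^-1: Y.
have sepX : separates e A B X := separates_contract sepY.
have xY : x \in Y.
  apply: contraLR (minsep X sepX) => xNY; rewrite -ltnNge.
  apply: leq_ltn_trans cardY; apply/subset_leq_card/subsetP => z.
  by rewrite inE /merge_vtx; case: ifP => // _ xY; rewrite xY in xNY.
exists X; split => //; rewrite ?inE /merge_vtx ?eqxx ?(negbTE nxy) //.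
apply: leq_trans (_ : #|y |: Y| <= k).
  apply/subset_leq_card/subsetP => z; rewrite !inE /merge_vtx.
  by case: eqP => // _ ->; rewrite orbT.
by rewrite cardsU1; case: (y \notin Y); [exact: cardY | exact: ltnW].
Qed.

End Contract.

Section ContractLift.
Variables (T : finType) (e : rel T) (x y : T).
Hypotheses (se : symmetric e) (exy : e x y) (nxy : x != y).

Lemma merge_vtx_neq z : merge_vtx x y z != y.
Proof. by rewrite /merge_vtx; case: ifP => // /negbT. Qed.

Section Preimage.
Variable s : seq T.
Let W := merge_vtx x y @^-1: s.
Let R := induced_rel e W.

Lemma merge_vtx_connect z :
  z \in W -> connect R z (merge_vtx x y z) /\ connect R (merge_vtx x y z) z.
Proof.
rewrite inE /merge_vtx; case: eqP => [-> xs|_ _]; last by split; exact: connect0.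
have [xW yW] : x \in W /\ y \in W by rewrite !inE /merge_vtx eqxx (negbTE nxy).
by split; apply: connect1; rewrite /R /induced_rel /= xW yW ?exy // se exy.
Qed.

Hypothesis y_s : y \notin s.

Lemma mem_merge_vtx_preim z : z \in s -> z \in W.
Proof. by move=> zs; rewrite inE /merge_vtx; case: eqP zs y_s => // -> ->. Qed.

Lemma contract_connect u w : u \in s -> w \in s -> contract e x y u w -> connect R u w.
Proof.
move=> us ws /and4P[_ _ _ cuw]; have [uW wW] := (mem_merge_vtx_preim us, mem_merge_vtx_preim ws).
have yW : x \in s -> y \in W by move=> xs; rewrite inE /merge_vtx eqxx.
have merge_y : merge_vtx x y y = x by rewrite /merge_vtx eqxx.
case/orP: cuw => [/orP[euw|/andP[/eqP ux eyw]]|/andP[/eqP wx euy]].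
- by apply: connect1; rewrite /R /induced_rel /= euw uW wW.
- rewrite ux in us *; have [_] := merge_vtx_connect (yW us); rewrite merge_y => xy.
  by apply: connect_trans xy (connect1 _); rewrite /R /induced_rel /= eyw yW // wW.
- rewrite wx in ws *; have [yx _] := merge_vtx_connect (yW ws); rewrite merge_y in yx.
  by apply: connect_trans (connect1 _) yx; rewrite /R /induced_rel /= euy yW // uW.
Qed.

End Preimage.

Lemma contract_path_lift (A B : {set T}) q :
  ab_path (contract e x y) (merge_vtx x y @: A) (merge_vtx x y @: B) q ->
  exists q', ab_path e A B q' /\ {subset verts q' <= merge_vtx x y @^-1: verts q}.
Proof.
move=> /and4P[pq /imsetP[a aA qa] /imsetP[b bB qb] _].
set W := merge_vtx x y @^-1: verts q.
have y_q : y \notin verts q.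
  by rewrite inE negb_or (contract_path_avoid pq) andbT qa eq_sym merge_vtx_neq.
have [aW bW] : a \in W /\ b \in W.
  by rewrite !inE -qa -qb; split; [exact: mem_head | exact: mem_last].
have /connectP[p Rp lp] : connect (induced_rel e W) a b.
  apply: connect_trans (proj1 (merge_vtx_connect aW)) _; rewrite -qa.
  apply: connect_trans _ (proj2 (merge_vtx_connect bW)); rewrite -qb.
  apply: (connect_sub _ (path_connect (path_induced_mem pq) (mem_last _ _))).
  by move=> u w /and3P[cuw]; rewrite !in_set => uq wq; exact (contract_connect y_q uq wq cuw).
move: bB; rewrite lp; case: (shortenP Rp) => p' Rp' up' _ bB.
have /andP[ep' Wp'] : path e a p' && all [in W] (a :: p') by rewrite -induced_path aW.
by exists (a, p'); split; [rewrite /ab_path ep' aA bB | exact/allP].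
Qed.

Lemma linkage_lift_contract (A B : {set T}) k (F : 'I_k -> T * seq T) :
  linkage (contract e x y) (merge_vtx x y @: A) (merge_vtx x y @: B) k F ->
  exists G, linkage e A B k G.
Proof.
move=> [abF disjF].
have /fin_all_exists[G HG] := fun i => contract_path_lift (abF i).
exists G; split=> [i|i j ij z zi zj]; first by case: (HG i).
have := (proj2 (HG i) z zi, proj2 (HG j) z zj); rewrite !inE => -[].
exact: disjF.
Qed.

End ContractLift.

Lemma linkage_subrel (T : finType) (e e' : rel T) A B k (F : 'I_k -> T * seq T) :
  subrel e e' -> linkage e A B k F -> linkage e' A B k F.
Proof.
move=> ee' [abF disjF]; split=> // i; have /and4P[pF aA lB uF] := abF i.
by rewrite /ab_path (sub_path ee' pF) aA lB uF.
Qed.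

Lemma linkage_no_edges (T : finType) (e : rel T) (A B : {set T}) k :
  nedges e = 0 -> (forall X, separates e A B X -> k <= #|X|) -> exists F, linkage e A B k F.
Proof.
move=> /eqP; rewrite cards_eq0 => /eqP noedge minsep.
have path_nil a p : path e a p -> p = [::].
  by case: p => [|b p] //= /andP[eab _]; have := in_set0 (a, b); rewrite -noedge inE eab.
have sepAB : separates e A B (A :&: B).
  by move=> a p aA /path_nil -> /= aB; rewrite inE aA aB.
have kAB := minsep _ sepAB.
exists (fun i => (enum_val (widen_ord kAB i), [::])); split=> [i|i j ij z].
  by have := enum_valP (widen_ord kAB i); rewrite inE /ab_path /= andbT.
rewrite /verts /= !inE => /eqP -> /eqP /enum_val_inj/(congr1 val) /= eqij.
by rewrite (val_inj eqij) eqxx in ij.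
Qed.

Theorem menger (T : finType) (e : rel T) (A B : {set T}) k :
  symmetric e -> irreflexive e -> (forall X, separates e A B X -> k <= #|X|) ->
  exists F, linkage e A B k F.
Proof.
have [n] := ubnP (nedges e); elim: n => // n IHn in e A B *; rewrite ltnS => en se ie minsep.
have [e0|] := posnP (nedges e); first exact: linkage_no_edges.
case/card_gt0P => -[x y]; rewrite inE /= => exy.
have nxy : x != y by apply: contraTneq exy => ->; rewrite ie.
case: (classic (exists Y, separates (contract e x y) (merge_vtx x y @: A)
                                     (merge_vtx x y @: B) Y /\ #|Y| < k)).
  move=> [Y [sepY cardY]].
  have [X [sepX cardX xX yX]] := contract_small_separator ie exy sepY cardY minsep.
  have IHdel := IHn (delete_edge e x y) _ _ (leq_trans (nedges_delete_edge exy) en)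
    (delete_edge_sym x y se) (delete_edge_irr x y ie).
  have [F1 link1] := IHdel A X
    (fun Z sepZ => minsep Z (separates_delete_edge_prefix xX yX sepX sepZ)).
  have [F2 link2] := IHdel X B
    (fun Z sepZ => minsep Z (separates_delete_edge_suffix xX yX sepX sepZ)).
  exact (linkage_glue sepX cardX (linkage_subrel (@delete_edge_sub _ e x y) link1)
                                 (linkage_subrel (@delete_edge_sub _ e x y) link2)).
move=> noY; have minsep' Y : separates (contract e x y) (merge_vtx x y @: A)
                                  (merge_vtx x y @: B) Y -> k <= #|Y|.
  by move=> sepY; rewrite leqNgt; apply/negP => cardY; apply: noY; exists Y.
have [F linkF] := IHn _ _ _ (leq_trans (nedges_contract ie exy) en) (contract_sym x y se)
  (contract_irr e x y) minsep'.
exact (linkage_lift_contract se exy nxy linkF).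
Qed.

Section Fans.
Variables (T : finType) (e : rel T).

Lemma induced_rel_sym U : symmetric e -> symmetric (induced_rel e U).
Proof. by move=> se a b; rewrite /induced_rel /= se (andbC (a \in U)). Qed.

Lemma induced_rel_irr U : irreflexive e -> irreflexive (induced_rel e U).
Proof. by move=> ie a; rewrite /induced_rel /= ie. Qed.

Lemma linked_of_separators v S k :
  symmetric e -> irreflexive e ->
  (forall X, separates (induced_rel e [set~ v]) [set a | e v a] S X -> k <= #|X|) ->
  k_linked e v S k.
Proof.
move=> se ie minsep.
have [F [abF disjF]] := menger (induced_rel_sym [set~ v] se) (induced_rel_irr [set~ v] ie) minsep.
exists (fun i => verts (F i)); split=> [i|i j ij z].
  have /and4P[pF aN lS uF] := abF i; rewrite inE in aN.
  have /andP[eF /allP avoid_v] : path e (F i).1 (F i).2 && all [in [set~ v]] (verts (F i)).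
    have a_v : (F i).1 \in [set~ v] by rewrite !inE; apply: contraTneq aN => ->; rewrite ie.
    by rewrite -induced_path a_v pF.
  have /andP[aF uF'] : ((F i).1 \notin (F i).2) && uniq (F i).2 := uF.
  rewrite /path_to /= aN eF lS aF uF' !andbT.
  by apply/negP => /avoid_v; rewrite !inE eqxx.
rewrite !inE => /orP[/eqP->//|zi] /orP[/eqP->//|zj].
by case: (disjF i j ij z zi zj).
Qed.

Lemma linked_le_nbhd (S X : {set T}) x k :
  S :&: X = set0 -> x \in X -> k_linked e x S k -> k <= #|nbhd e X|.
Proof.
move=> SX0 xX [P [pathP disjP]].
have notSX z : z \in X -> z \notin S.
  by move=> zX; apply/negP => zS; have := in_set0 z; rewrite -SX0 inE zS zX.
have /fin_all_exists[f fP] : forall i, exists z, (z \in P i) && (z \in nbhd e X).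
  move=> i; have /and3P[pP _ lS] := pathP i.
  have lX : last x (P i) \notin X by apply/negP => /notSX; rewrite lS.
  have [z [w [zP zX wP wX ewz]]] := path_exit_edge (X := [in X]) pP xX lX.
  by exists z; rewrite zP inE zX; apply/existsP; exists w; rewrite wX.
have finj : injective f.
  move=> i j fij; apply/eqP/contraT => ij; have /andP[fi fN] := fP i; have /andP[fj _] := fP j.
  have fx : f i = x by apply: disjP ij _ _ _; rewrite inE ?fi ?fij ?fj orbT.
  by move: fN; rewrite fx inE xX.
rewrite -[k]card_ord -(card_imset _ finj); apply/subset_leq_card/subsetP.
by move=> _ /imsetP[i _ ->]; case/andP: (fP i).
Qed.

End Fans.

Definition component (T : finType) (e : rel T) (U : {set T}) (v : T) : {set T} :=
  [set z | connect (induced_rel e U) v z].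

Section Component.
Variables (T : finType) (e : rel T) (U : {set T}) (v : T).

Lemma induced_rel_sub : subrel (induced_rel e U) e.
Proof. by move=> a b /and3P[]. Qed.

Lemma component_connected : symmetric e -> induced_connected e (component e U v).
Proof.
move=> se; pose Y := component e U v.
have conn_v z : z \in Y -> connect (induced_rel e Y) v z.
  rewrite inE => /connectP[p pU ->]; apply/connectP; exists p => //.
  suff /andP[] : (v \in Y) && path (induced_rel e Y) v p by [].
  rewrite induced_path (sub_path induced_rel_sub pU); apply/allP => w wp.
  by rewrite inE (path_connect pU wp).
move=> a b /conn_v va /conn_v vb; apply: connect_trans vb.
by rewrite (sym_connect_sym (induced_rel_sym Y se)).
Qed.

Lemma component_sub : v \in U -> component e U v \subset U.
Proof.
move=> vU; apply/subsetP => z; rewrite inE => /connectP[p pU ->].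
have := induced_path e U v p; rewrite vU pU => /esym/andP[_ allU].
exact: (allP allU _ (mem_last v p)).
Qed.

Lemma component_nbhd : v \in U -> nbhd e (component e U v) \subset ~: U.
Proof.
move=> vU; apply/subsetP => z; rewrite !inE => /andP[zY /existsP[w /andP[wY ewz]]].
have wU : w \in U by apply: (subsetP (component_sub vU)).
apply: contraNN zY => zU; rewrite inE in wY; apply: (connect_trans wY).
by apply: connect1; rewrite /induced_rel /= ewz wU zU.
Qed.

End Component.

Lemma separator_blocks_component (T : finType) (e : rel T) (S X : {set T}) v s :
  v \notin S -> separates (induced_rel e [set~ v]) [set a | e v a] S X -> s \in S ->
  s \notin component e (~: (X :\ v)) v.
Proof.
move=> vS sepX sS; rewrite inE; apply/negP => /connectP[p pU sp].
move: sS; rewrite sp; case: (shortenP pU) => {p pU sp} p pU up _.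
case: p pU up => [|a q] /=; first by rewrite (negbTE vS).
case/andP=> /and3P[eva _ aU] pU /andP[vq _] lS.
have /andP[eaq allU] : path e a q && all [in ~: (X :\ v)] (a :: q).
  by rewrite -induced_path aU pU.
have avoid_v : all [in [set~ v]] (a :: q).
  by apply/allP => w wq; rewrite !inE; apply: contraNneq vq => <-.
have pv : path (induced_rel e [set~ v]) a q.
  by have := induced_path e [set~ v] a q; rewrite eaq avoid_v => /andP[].
have aN : a \in [set a | e v a] by rewrite inE.
have /hasP[w wq wX] := sepX a q aN pv lS.
have := allP allU w wq; rewrite !inE wX andbT negbK => /eqP wv.
by rewrite -wv wq in vq.
Qed.

Theorem proposition1 (T : finType) (e : rel T) (r : T -> nat) (S : {set T}) :
  simple_graph e ->
  (vector_connectivity_set e r S <->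
   (forall X : {set T}, X != set0 -> induced_connected e X ->
      #|nbhd e X| < Rmax r X -> S :&: X != set0)).
Proof.
case=> se ie; split=> [vcs X _ _ ltR|H v vS].
  apply/negP => /eqP SX0; move: ltR; rewrite ltnNge => /negP; apply.
  apply/bigmax_leqP => x xX; apply: (linked_le_nbhd SX0 xX); apply: vcs.
  by apply/negP => xS; have := in_set0 x; rewrite -SX0 inE xS xX.
apply: linked_of_separators => // X sepX; rewrite leqNgt; apply/negP => ltX.
pose U := ~: (X :\ v); pose Y := component e U v.
have vU : v \in U by rewrite !inE eqxx.
have vY : v \in Y by rewrite inE connect0.
have NY : nbhd e Y \subset X.
  by apply: subset_trans (component_nbhd e vU) _; rewrite setCK subsetDl.
have ltR : #|nbhd e Y| < Rmax r Y.
  exact: leq_ltn_trans (subset_leq_card NY) (leq_trans ltX (leq_bigmax_cond _ vY)).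
have Y0 : Y != set0 by apply/set0Pn; exists v.
have /set0Pn[s] := H Y Y0 (component_connected se) ltR.
by rewrite inE => /andP[sS sY]; move: (separator_blocks_component vS sepX sS); rewrite sY.
Qed.
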